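(* For every positive integer $n$, let $H(n)=\sum_{i=1}^n \frac{1}{i}$ denote the $n$-th harmonic number and let $\gamma$ denote the Euler–Mascheroni constant. Then \[ -\frac{1}{12n^2+\frac{2(7-12\gamma)}{2\gamma-1}}\le H(n)-\ln n-\frac{1}{2n}-\gamma<-\frac{1}{12n^2+\frac{6}{5}}, \] with equality in the left-hand inequality if and only if $n=1$. Moreover, the constants $\frac{2(7-12\gamma)}{2\gamma-1}$ and $\frac{6}{5}$ are the best possible: the former cannot be replaced by any larger constant and the latter cannot be replaced by any smaller constant while keeping the respective inequality valid for all positive integers $n$.
   Context: $\gamma=\lim_{n\to\infty}\bigl(H(n)-\ln n\bigr)=0.57721566\ldots$ is the Euler–Mascheroni constant; $\ln$ is the natural logarithm. *)

From Stdlib Require Import Reals.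
From Coquelicot Require Import Coquelicot.
Open Scope R_scope.

Fixpoint harmonic (n : nat) : R :=
  match n with
  | O => 0
  | S k => harmonic k + / INR (S k)
  end.

Definition euler_gamma : R :=
  real (Lim_seq (fun n => harmonic n - ln (INR n))).

Definition harm_err (n : nat) : R :=
  harmonic n - ln (INR n) - / (2 * INR n) - euler_gamma.

Definition const_a : R := 2 * (7 - 12 * euler_gamma) / (2 * euler_gamma - 1).

From Stdlib Require Import Reals Lra Psatz Lia.
From Coquelicot Require Import Coquelicot.
Open Scope R_scope.

(* S(n) = H(n) - ln n - 1/(2n) increases to gamma.  Expanding
   ln(1 + 1/x) = 2 artanh(1/(2x+1)) squeezes the increment S(n+1) - S(n) between the
   differences q_c(n) - q_c(n+1) of q_c(x) = 1/(12x^2 + c), for c = 6/5 (from below,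
   n >= 1) and c = 1 (from above, n >= 2).  Telescoping up to the limit gives
   1/(12n^2 + 6/5) < gamma - S(n) and, for n >= 2, gamma - S(n) <= 1/(12n^2 + 1), which
   is below 1/(12n^2 + a) because the lower bound on gamma from n = 2 forces a < 1; at
   n = 1 the left-hand inequality is an equality by the definition of a.  Optimality of
   6/5 comes from the sharper bound gamma - S(n) <= q_{6/5}(n) + 1/(4n(n+1)...(n+4)),
   whose correction is O(n^-5) whereas q_b(n) - q_{6/5}(n) is of order n^-4. *)

Lemma le_of_derive_nonneg (f df : R -> R) (a b : R) :
  a <= b ->
  (forall z, a <= z <= b -> is_derive f z (df z)) ->
  (forall z, a <= z <= b -> 0 <= df z) -> f a <= f b.
Proof.
  intros Hab Hd Hpos.
  destruct (MVT_gen f a b df) as [c [Hc Hmvt]];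
    rewrite ?Rmin_left, ?Rmax_right in * by lra.
  - intros z Hz; apply Hd; lra.
  - intros z Hz; apply continuity_pt_filterlim, (ex_derive_continuous f z).
    exists (df z); now apply Hd.
  - pose proof (Hpos c Hc); nra.
Qed.

Lemma atanh_series_le (y : R) : 0 <= y < 1 ->
  2 * (y + y^3/3 + y^5/5 + y^7/7) <= ln (1 + y) - ln (1 - y).
Proof.
  intros Hy.
  set (f z := ln (1 + z) - ln (1 - z) - 2 * (z + z^3/3 + z^5/5 + z^7/7)).
  enough (f 0 <= f y) by (unfold f in *; rewrite Rplus_0_r, Rminus_0_r, ln_1 in *; lra).
  apply (le_of_derive_nonneg f (fun z => 2 * z^8 / (1 - z^2))); [lra | |].
  - intros z Hz; unfold f; auto_derive; [repeat split; lra | field; repeat split; nra].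
  - intros z Hz; apply Rmult_le_pos.
    + pose proof (pow2_ge_0 (z^4)); replace (z^8) with ((z^4)^2) by ring; lra.
    + apply Rlt_le, Rinv_0_lt_compat; nra.
Qed.

Lemma atanh_le_series (y : R) : 0 <= y < 1 ->
  ln (1 + y) - ln (1 - y) <= 2 * (y + y^3/3 + y^5 / (5 * (1 - y^2))).
Proof.
  intros Hy.
  set (f z := 2 * (z + z^3/3 + z^5 / (5 * (1 - z^2))) - (ln (1 + z) - ln (1 - z))).
  enough (f 0 <= f y) by (unfold f in *; rewrite Rplus_0_r, Rminus_0_r, ln_1 in *; lra).
  apply (le_of_derive_nonneg f (fun z => 4 * z^6 / (5 * (1 - z^2)^2))); [lra | |].
  - intros z Hz; unfold f; auto_derive; [repeat split; nra | field; repeat split; nra].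
  - intros z Hz; apply Rmult_le_pos.
    + pose proof (pow2_ge_0 (z^3)); replace (z^6) with ((z^3)^2) by ring; lra.
    + apply Rlt_le, Rinv_0_lt_compat; assert (0 < 1 - z^2) by nra; nra.
Qed.

Lemma inv_odd_bounds (x : R) : 0 < x -> 0 < / (2*x + 1) < 1.
Proof.
  intros Hx; split; [apply Rinv_0_lt_compat; lra |].
  rewrite <- Rinv_1; apply Rinv_lt_contravar; lra.
Qed.

Lemma ln_succ_sub_ln (x : R) : 0 < x ->
  ln (x + 1) - ln x = ln (1 + / (2*x + 1)) - ln (1 - / (2*x + 1)).
Proof.
  intros Hx.
  pose proof (inv_odd_bounds x Hx).
  rewrite <- !ln_div by lra; f_equal; field; lra.
Qed.

Definition ln_succ_lower (x : R) : R :=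
  2/(2*x+1) + 2/(3*(2*x+1)^3) + 2/(5*(2*x+1)^5) + 2/(7*(2*x+1)^7).

Definition ln_succ_upper (x : R) : R :=
  2/(2*x+1) + 2/(3*(2*x+1)^3) + 1/(10*x*(x+1)*(2*x+1)^3).

Lemma ln_succ_lower_le (x : R) : 0 < x -> ln_succ_lower x <= ln (x + 1) - ln x.
Proof.
  intros Hx; rewrite (ln_succ_sub_ln x Hx).
  pose proof (inv_odd_bounds x Hx).
  replace (ln_succ_lower x) with
    (2 * (/(2*x+1) + (/(2*x+1))^3/3 + (/(2*x+1))^5/5 + (/(2*x+1))^7/7))
    by (unfold ln_succ_lower; field; lra).
  apply atanh_series_le; lra.
Qed.

Lemma ln_succ_le_upper (x : R) : 0 < x -> ln (x + 1) - ln x <= ln_succ_upper x.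
Proof.
  intros Hx; rewrite (ln_succ_sub_ln x Hx).
  pose proof (inv_odd_bounds x Hx).
  replace (ln_succ_upper x) with
    (2 * (/(2*x+1) + (/(2*x+1))^3/3 + (/(2*x+1))^5 / (5 * (1 - (/(2*x+1))^2))))
    by (unfold ln_succ_upper; field; repeat split; nra).
  apply atanh_le_series; lra.
Qed.

Definition harm_step (x : R) : R := /(2*x) + /(2*(x+1)) - (ln (x + 1) - ln x).

Definition quad_inv (c x : R) : R := /(12*x^2 + c).

Definition tail_corr (x : R) : R := /(4*(x*(x+1)*(x+2)*(x+3)*(x+4))).

Ltac pose_nonneg_powers s Hs n :=
  lazymatch n with
  | O => idtac
  | S ?m => pose proof (pow_le s n Hs); pose_nonneg_powers s Hs m
  end.

Lemma quad_inv_diff_lt_harm_step (x : R) : 1 <= x ->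
  quad_inv (6/5) x - quad_inv (6/5) (x + 1) < harm_step x.
Proof.
  intros Hx; pose proof (ln_succ_le_upper x ltac:(lra)).
  enough (0 < /(2*x) + /(2*(x+1)) - ln_succ_upper x
              - (quad_inv (6/5) x - quad_inv (6/5) (x + 1))) by (unfold harm_step; lra).
  unfold ln_succ_upper, quad_inv.
  replace x with ((x - 1) + 1) by ring; set (s := x - 1).
  assert (Hs : 0 <= s) by (unfold s; lra); clearbody s.
  (* In all three estimates, after shifting [x] to [s + x0] the difference is a quotient
     of polynomials in [s] with positive coefficients. *)
  match goal with |- 0 < ?e =>
    replace e with ((5952/125 + 1548/25*s + 516/25*s^2)
                    / ((12*(s+1)^2+6/5) * (12*(s+2)^2+6/5) * (2*s+3)^3 * (s+1) * (s+2)))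
      by (field; repeat split; nra) end.
  apply Rdiv_lt_0_compat; [nra | repeat apply Rmult_lt_0_compat; try apply pow_lt; nra].
Qed.

Lemma harm_step_le_quad_inv_diff (x : R) : 2 <= x ->
  harm_step x <= quad_inv 1 x - quad_inv 1 (x + 1).
Proof.
  intros Hx; pose proof (ln_succ_lower_le x ltac:(lra)).
  enough (0 <= quad_inv 1 x - quad_inv 1 (x + 1)
               - (/(2*x) + /(2*(x+1)) - ln_succ_lower x)) by (unfold harm_step; lra).
  unfold ln_succ_lower, quad_inv.
  replace x with ((x - 2) + 2) by ring; set (s := x - 2).
  assert (Hs : 0 <= s) by (unfold s; lra); clearbody s.
  match goal with |- 0 <= ?e =>
    replace e with ((161107/2 + 6698968/21*s + 18183856/35*s^2 + 9743408/21*s^3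
                     + 26379704/105*s^4 + 595008/7*s^5 + 1849408/105*s^6 + 2048*s^7
                     + 512/5*s^8)
                    / ((12*(s+2)^2+1) * (12*(s+3)^2+1) * (2*s+5)^7 * (s+2) * (s+3)))
      by (field; repeat split; nra) end.
  pose_nonneg_powers s Hs 8%nat.
  apply Rlt_le, Rdiv_lt_0_compat; [lra | repeat apply Rmult_lt_0_compat; try apply pow_lt; nra].
Qed.

Lemma harm_step_le_tail_diff (x : R) : 1 <= x ->
  harm_step x <= (quad_inv (6/5) x + tail_corr x) - (quad_inv (6/5) (x+1) + tail_corr (x+1)).
Proof.
  intros Hx; pose proof (ln_succ_lower_le x ltac:(lra)).
  enough (0 <= (quad_inv (6/5) x + tail_corr x) - (quad_inv (6/5) (x+1) + tail_corr (x+1))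
               - (/(2*x) + /(2*(x+1)) - ln_succ_lower x)) by (unfold harm_step; lra).
  unfold ln_succ_lower, quad_inv, tail_corr.
  replace x with ((x - 1) + 1) by ring; set (s := x - 1).
  assert (Hs : 0 <= s) by (unfold s; lra); clearbody s.
  match goal with |- 0 <= ?e =>
    replace e with ((54268299/175 + 756290682/125*s + 25656657966/875*s^2
                     + 62767164816/875*s^3 + 94401725454/875*s^4 + 13567546188/125*s^5
                     + 66380878524/875*s^6 + 4651208352/125*s^7 + 11049448296/875*s^8
                     + 496112256/175*s^9 + 66467328/175*s^10 + 23040*s^11)
                    / ((12*(s+1)^2+6/5) * (12*(s+2)^2+6/5) * (2*s+3)^7
                       * (s+1) * (s+2) * (s+3) * (s+4) * (s+5) * (s+6)))
      by (field; repeat split; nra) end.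
  pose_nonneg_powers s Hs 11%nat.
  apply Rlt_le, Rdiv_lt_0_compat; [lra | repeat apply Rmult_lt_0_compat; try apply pow_lt; nra].
Qed.

Lemma harm_step_pos (x : R) : 1 <= x -> 0 < harm_step x.
Proof.
  intros Hx; pose proof (quad_inv_diff_lt_harm_step x Hx).
  enough (quad_inv (6/5) (x + 1) <= quad_inv (6/5) x) by lra.
  unfold quad_inv; apply Rinv_le_contravar; nra.
Qed.

Lemma quad_inv_pos (c x : R) : 0 < c -> 0 < quad_inv c x.
Proof. intros Hc; unfold quad_inv; apply Rinv_0_lt_compat; nra. Qed.

Lemma tail_corr_pos (x : R) : 0 < x -> 0 < tail_corr x.
Proof.
  intros Hx; unfold tail_corr; apply Rinv_0_lt_compat; repeat apply Rmult_lt_0_compat; lra.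
Qed.

Lemma is_lim_seq_inv_of_ge_INR (v : nat -> R) :
  (forall k, INR k <= v k) -> is_lim_seq (fun k => / v k) 0.
Proof.
  intros Hv; apply is_lim_seq_incr_1.
  apply is_lim_seq_le_le with (u := fun _ => 0) (w := fun k => / INR (S k)).
  - intros k; specialize (Hv (S k)); pose proof (lt_0_INR (S k) (Nat.lt_0_succ k)).
    split; [apply Rlt_le, Rinv_0_lt_compat | apply Rinv_le_contravar]; lra.
  - apply is_lim_seq_const.
  - apply (is_lim_seq_inv (fun k => INR (S k)) p_infty); [| discriminate].
    now apply (is_lim_seq_incr_1 INR p_infty), is_lim_seq_INR.
Qed.

Lemma is_lim_seq_quad_inv (c : R) : 0 <= c -> is_lim_seq (fun k => quad_inv c (INR k)) 0.
Proof.
  intros Hc; apply is_lim_seq_inv_of_ge_INR; intros k.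
  destruct k as [|k]; [simpl; lra |].
  assert (1 <= INR (S k)) by (apply (le_INR 1); lia); nra.
Qed.

Lemma is_lim_seq_tail_corr : is_lim_seq (fun k => tail_corr (INR k)) 0.
Proof.
  apply is_lim_seq_inv_of_ge_INR; intros k; pose proof (pos_INR k) as Hk.
  assert (24 <= (INR k + 1) * (INR k + 2) * (INR k + 3) * (INR k + 4)).
  { assert (2 <= (INR k + 1) * (INR k + 2)) by nra.
    assert (6 <= (INR k + 1) * (INR k + 2) * (INR k + 3)) by nra; nra. }
  nra.
Qed.

Lemma lim_ge_of_incr_from (u : nat -> R) (l : R) (n : nat) :
  is_lim_seq u l -> (forall k, (n <= k)%nat -> u k <= u (S k)) -> u n <= l.
Proof.
  intros Hu Hincr; change (u (0 + n)%nat <= l).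
  apply (is_lim_seq_incr_compare (fun k => u (k + n)%nat) l).
  - now apply (is_lim_seq_incr_n u n l).
  - intros k; apply Hincr; lia.
Qed.

Lemma lim_le_of_decr_from (u : nat -> R) (l : R) (n : nat) :
  is_lim_seq u l -> (forall k, (n <= k)%nat -> u (S k) <= u k) -> l <= u n.
Proof.
  intros Hu Hdecr; change (l <= u (0 + n)%nat).
  apply (is_lim_seq_decr_compare (fun k => u (k + n)%nat) l).
  - now apply (is_lim_seq_incr_n u n l).
  - intros k; apply Hdecr; lia.
Qed.

Definition harm_shift (n : nat) : R := harmonic n - ln (INR n) - / (2 * INR n).

Lemma harm_shift_succ (n : nat) : (1 <= n)%nat ->
  harm_shift (S n) = harm_shift n + harm_step (INR n).
Proof.
  intros Hn; unfold harm_shift, harm_step.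
  change (harmonic (S n)) with (harmonic n + / INR (S n)); rewrite S_INR.
  assert (1 <= INR n) by (apply (le_INR 1); exact Hn); field; lra.
Qed.

Lemma harm_shift_corr_decr (n : nat) : (1 <= n)%nat ->
  harm_shift (S n) + (quad_inv (6/5) (INR (S n)) + tail_corr (INR (S n)))
  <= harm_shift n + (quad_inv (6/5) (INR n) + tail_corr (INR n)).
Proof.
  intros Hn; rewrite harm_shift_succ, S_INR by exact Hn.
  pose proof (harm_step_le_tail_diff (INR n) (le_INR 1 n Hn)); lra.
Qed.

Lemma is_lim_seq_harm_shift : is_lim_seq harm_shift euler_gamma.
Proof.
  set (a n := harm_shift (S n)).
  assert (Hincr : forall n, a n <= a (S n)).
  { intros n; unfold a; rewrite (harm_shift_succ (S n)) by lia.
    pose proof (harm_step_pos (INR (S n)) (le_INR 1 (S n) ltac:(lia))); lra. }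
  set (corr n := quad_inv (6/5) (INR (S n)) + tail_corr (INR (S n))).
  assert (Hbound : forall n, a n + corr n <= a 0%nat + corr 0%nat).
  { induction n as [|n IH]; [lra |].
    pose proof (harm_shift_corr_decr (S n) ltac:(lia)); unfold a, corr in *; lra. }
  assert (Hcorr : forall n, 0 < corr n).
  { intros n; pose proof (lt_0_INR (S n) (Nat.lt_0_succ n)) as HSn.
    pose proof (quad_inv_pos (6/5) (INR (S n)) ltac:(lra)).
    pose proof (tail_corr_pos (INR (S n)) HSn); unfold corr; lra. }
  destruct (ex_finite_lim_seq_incr a (a 0%nat + corr 0%nat) Hincr)
    as [L HL]; [intros n; specialize (Hbound n); specialize (Hcorr n); lra |].
  assert (Hgamma : is_lim_seq (fun n => harmonic n - ln (INR n)) L).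
  { apply is_lim_seq_incr_1.
    apply is_lim_seq_ext with (fun n => a n + / (2 * INR (S n))).
    { intros n; unfold a, harm_shift; ring. }
    replace L with (L + 0) by ring; apply is_lim_seq_plus'; [exact HL |].
    apply (is_lim_seq_incr_1 (fun n => / (2 * INR n))), is_lim_seq_inv_of_ge_INR.
    intros k; pose proof (pos_INR k); lra. }
  unfold euler_gamma; rewrite (is_lim_seq_unique _ _ Hgamma).
  now apply is_lim_seq_incr_1.
Qed.

Lemma quad_inv_lt_gamma_sub_harm_shift (n : nat) : (1 <= n)%nat ->
  quad_inv (6/5) (INR n) < euler_gamma - harm_shift n.
Proof.
  intros Hn; set (u k := harm_shift k + quad_inv (6/5) (INR k)).
  assert (Hstep : forall k, (1 <= k)%nat -> u k < u (S k)).
  { intros k Hk; unfold u; rewrite harm_shift_succ, S_INR by exact Hk.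
    pose proof (quad_inv_diff_lt_harm_step (INR k) (le_INR 1 k Hk)); lra. }
  assert (u (S n) <= euler_gamma).
  { apply lim_ge_of_incr_from; [| intros k Hk; apply Rlt_le, Hstep; lia].
    replace euler_gamma with (euler_gamma + 0) by ring.
    apply is_lim_seq_plus'; [exact is_lim_seq_harm_shift | apply is_lim_seq_quad_inv; lra]. }
  pose proof (Hstep n Hn); unfold u in *; lra.
Qed.

Lemma gamma_sub_harm_shift_le_quad_inv (n : nat) : (2 <= n)%nat ->
  euler_gamma - harm_shift n <= quad_inv 1 (INR n).
Proof.
  intros Hn.
  enough (euler_gamma <= harm_shift n + quad_inv 1 (INR n)) by lra.
  apply (lim_le_of_decr_from (fun k => harm_shift k + quad_inv 1 (INR k))).
  - replace euler_gamma with (euler_gamma + 0) by ring.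
    apply is_lim_seq_plus'; [exact is_lim_seq_harm_shift | apply is_lim_seq_quad_inv; lra].
  - intros k Hk; rewrite harm_shift_succ, S_INR by lia.
    pose proof (harm_step_le_quad_inv_diff (INR k) (le_INR 2 k ltac:(lia))); lra.
Qed.

Lemma gamma_sub_harm_shift_le_corr (n : nat) : (1 <= n)%nat ->
  euler_gamma - harm_shift n <= quad_inv (6/5) (INR n) + tail_corr (INR n).
Proof.
  intros Hn.
  enough (euler_gamma <= harm_shift n + (quad_inv (6/5) (INR n) + tail_corr (INR n))) by lra.
  apply (lim_le_of_decr_from
           (fun k => harm_shift k + (quad_inv (6/5) (INR k) + tail_corr (INR k)))).
  - replace euler_gamma with (euler_gamma + (0 + 0)) by ring.
    apply is_lim_seq_plus'; [exact is_lim_seq_harm_shift |].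
    apply is_lim_seq_plus'; [apply is_lim_seq_quad_inv; lra | exact is_lim_seq_tail_corr].
  - intros k Hk; apply harm_shift_corr_decr; lia.
Qed.

Lemma harm_err_eq (n : nat) : harm_err n = harm_shift n - euler_gamma.
Proof. unfold harm_err, harm_shift; ring. Qed.

(* The upper bound at [n = 2] gives [gamma > 5/4 - ln 2 + 5/246 > 15/26]. *)
Lemma euler_gamma_gt : 15/26 < euler_gamma.
Proof.
  pose proof (quad_inv_lt_gamma_sub_harm_shift 2 ltac:(lia)) as H.
  pose proof (ln_succ_le_upper 1 ltac:(lra)) as Hln2.
  unfold harm_shift, quad_inv, ln_succ_upper in *; simpl harmonic in H.
  replace (INR 2) with (1 + 1) in H by (simpl; ring).
  replace (ln 1) with 0 in Hln2 by (symmetry; exact ln_1).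
  assert (E : 2/(2*1+1) + 2/(3*(2*1+1)^3) + 1/(10*1*(1+1)*(2*1+1)^3) = 2/3 + 2/81 + 1/540)
    by field.
  assert (E' : /(12*(1+1)^2 + 6/5) = 5/246) by field.
  rewrite E in Hln2; rewrite E' in H; field_simplify in H; lra.
Qed.

Lemma twelve_add_const_a : 12 + const_a = 2 / (2 * euler_gamma - 1).
Proof. pose proof euler_gamma_gt; unfold const_a; field; lra. Qed.

Lemma const_a_bounds : -12 < const_a < 1.
Proof.
  pose proof euler_gamma_gt.
  enough (0 < 2 / (2 * euler_gamma - 1) < 13) by (rewrite <- twelve_add_const_a in *; lra).
  split; [apply Rdiv_lt_0_compat; lra |].
  apply (Rmult_lt_reg_r (2 * euler_gamma - 1)); [lra |].
  unfold Rdiv; rewrite Rmult_assoc, Rinv_l by lra; lra.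
Qed.

Lemma harm_err_1 : harm_err 1 = - / (12 * INR 1 ^ 2 + const_a).
Proof.
  pose proof euler_gamma_gt.
  replace (12 * INR 1 ^ 2 + const_a) with (12 + const_a) by (simpl; ring).
  rewrite twelve_add_const_a; unfold harm_err; simpl harmonic; simpl INR.
  rewrite ln_1; field; lra.
Qed.

Lemma harm_err_gt (n : nat) : (2 <= n)%nat -> - / (12 * INR n ^ 2 + const_a) < harm_err n.
Proof.
  intros Hn; rewrite harm_err_eq.
  pose proof (gamma_sub_harm_shift_le_quad_inv n Hn); pose proof const_a_bounds.
  assert (2 <= INR n) by (apply (le_INR 2); exact Hn).
  enough (quad_inv 1 (INR n) < / (12 * INR n ^ 2 + const_a)) by lra.
  apply Rinv_lt_contravar; [apply Rmult_lt_0_compat |]; nra.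
Qed.

Lemma harm_err_lt (n : nat) : (1 <= n)%nat -> harm_err n < - / (12 * INR n ^ 2 + 6/5).
Proof.
  intros Hn; rewrite harm_err_eq.
  pose proof (quad_inv_lt_gamma_sub_harm_shift n Hn); unfold quad_inv in *; lra.
Qed.

Lemma quad_inv_add_tail_corr_le (b x : R) : 1 <= x -> -x <= b -> 49 <= (6/5 - b) * x ->
  quad_inv (6/5) x + tail_corr x <= quad_inv b x.
Proof.
  intros Hx Hbx Hb; unfold quad_inv, tail_corr.
  assert (Hx5 : 0 < x^5) by (apply pow_lt; lra).
  assert (x^5 <= x*(x+1)*(x+2)*(x+3)*(x+4)).
  { replace (x^5) with (x*x*x*x*x) by ring.
    repeat apply Rmult_le_compat; try lra; repeat apply Rmult_le_pos; lra. }
  assert (/(4*(x*(x+1)*(x+2)*(x+3)*(x+4))) <= /(4*x^5)) by (apply Rinv_le_contravar; lra).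
  set (P := 12*x^2 + b); set (Q := 12*x^2 + 6/5).
  assert (0 < P) by (unfold P; nra); assert (0 < Q) by (unfold Q; nra).
  assert (HPQ : P * Q <= 4 * x^5 * (6/5 - b)).
  { assert (P * Q <= (14*x^2) * (14*x^2)) by (apply Rmult_le_compat; unfold P, Q; nra).
    pose proof (pow_le x 4 ltac:(lra)).
    replace (4 * x^5 * (6/5 - b)) with (4 * x^4 * ((6/5 - b) * x)) by ring; nra. }
  assert (HQP : Q - P = 6/5 - b) by (unfold P, Q; ring).
  clearbody P Q; rewrite <- HQP in HPQ.
  replace (/P) with (/Q + / (4*x^5) + (4*x^5*(Q - P) - P*Q) / (P*Q*(4*x^5)))
    by (field; repeat split; lra).
  enough (0 <= (4*x^5*(Q - P) - P*Q) / (P*Q*(4*x^5))) by lra.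
  apply Rmult_le_pos; [lra |].
  apply Rlt_le, Rinv_0_lt_compat; repeat apply Rmult_lt_0_compat; lra.
Qed.

Lemma exists_harm_err_ge (b : R) : b < 6/5 ->
  exists n : nat, (1 <= n)%nat /\ - / (12 * INR n ^ 2 + b) <= harm_err n.
Proof.
  intros Hb.
  destruct (INR_archimed 1 (49 / (6/5 - b) + Rabs b + 1) ltac:(lra)) as [n Hn].
  rewrite Rmult_1_r in Hn; pose proof (Rabs_pos b); pose proof (Rabs_maj2 b).
  assert (49 / (6/5 - b) * (6/5 - b) = 49) by (field; lra).
  assert (0 < 49 / (6/5 - b)) by (apply Rdiv_lt_0_compat; lra).
  assert (Hn1 : (1 <= n)%nat) by (apply INR_le; simpl; lra).
  exists n; split; [exact Hn1 |].
  pose proof (gamma_sub_harm_shift_le_corr n Hn1).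
  pose proof (quad_inv_add_tail_corr_le b (INR n) ltac:(lra) ltac:(lra) ltac:(nra)).
  rewrite harm_err_eq; unfold quad_inv in *; lra.
Qed.

Theorem theorem1 :
  (forall n : nat, (1 <= n)%nat ->
     - / (12 * INR n ^ 2 + const_a) <= harm_err n /\
     harm_err n < - / (12 * INR n ^ 2 + 6 / 5)) /\
  (forall n : nat, (1 <= n)%nat ->
     (harm_err n = - / (12 * INR n ^ 2 + const_a) <-> n = 1%nat)) /\
  (forall a : R, a > const_a ->
     exists n : nat, (1 <= n)%nat /\ ~ (- / (12 * INR n ^ 2 + a) <= harm_err n)) /\
  (forall b : R, b < 6 / 5 ->
     exists n : nat, (1 <= n)%nat /\ ~ (harm_err n < - / (12 * INR n ^ 2 + b))).
Proof.
  split; [| split; [| split]].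
  - intros n Hn; split; [| exact (harm_err_lt n Hn)].
    destruct (Nat.eq_dec n 1) as [-> | Hne]; [rewrite harm_err_1; lra |].
    apply Rlt_le, harm_err_gt; lia.
  - intros n Hn; split; [| intros ->; exact harm_err_1].
    intros Heq; destruct (Nat.eq_dec n 1) as [-> | Hne]; [reflexivity |].
    pose proof (harm_err_gt n ltac:(lia)); lra.
  - intros a Ha; exists 1%nat; split; [lia |].
    rewrite harm_err_1; pose proof const_a_bounds.
    enough (/ (12 * INR 1 ^ 2 + a) < / (12 * INR 1 ^ 2 + const_a)) by lra.
    simpl; apply Rinv_lt_contravar; nra.
  - intros b Hb; destruct (exists_harm_err_ge b Hb) as [n [Hn Hge]].
    exists n; split; [exact Hn | lra].
Qed.
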